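(* For any uplink zero-forcing message passing decoding scheme in the locally connected network with connectivity parameter $L$, and any two decoding pairs $(\text{MT } i_1,\text{BS } j_1)$ and $(\text{MT } i_2,\text{BS } j_2)$, we have $i_1>i_2$ if and only if $j_1>j_2$.
   Context: Network: $K$ base stations BS $1,\dots,K$ and $K$ mobile terminals MT $1,\dots,K$, single-antenna; the channel coefficient $H_{i,j}$ between MT $i$ and BS $j$ is zero iff $i\notin\{j,\dots,j+L\}$, nonzero coefficients generic (drawn from a continuous joint distribution). Uplink: BS $j$ receives $Y_j=\sum_iH_{i,j}X_i+Z_j$. MT $i$ has message $W_i$ and is associated with a set $\mathcal C_i\subseteq[K]$ of base stations, $|\mathcal C_i|\le N_c$. Zero-forcing message passing decoding: each message is decoded at at most one base station; a decoded message is passed over the backhaul to the other base stations in its association set, which use it only to cancel its interference. The pair (MT $j$, BS $i$) is a decoding pair if $i\in\mathcal C_j$ and, given the messages $B_i$ that BS $i$ has received over the backhaul, the noiseless signal $Y_i-Z_i$ depends on $W_j$ and on no other message, so $W_j$ is decoded at BS $i$. *)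

From mathcomp Require Import all_boot all_order all_algebra.
Set Implicit Arguments. Unset Strict Implicit. Unset Printing Implicit Defensive.
Import GRing.Theory.
Local Open Scope ring_scope.

(* Indices: MTs and BSs are 'I_K (0-based).  H i j is the channel coefficient
   between MT i and BS j. *)

Definition locally_connected (R : nzRingType) (K L : nat) (H : 'M[R]_K) : Prop :=
  forall (i j : 'I_K), H i j != 0 <-> (j <= i <= j + L)%N.

Definition noiseless_signal (R : nzRingType) (K : nat) (H : 'M[R]_K) (j : 'I_K)
  (x : 'I_K -> R) : R := \sum_(k < K) H k j * x k.

Definition depends_on (R : nzRingType) (K : nat) (H : 'M[R]_K) (j k : 'I_K) : Prop :=
  exists x x' : 'I_K -> R, (forall l, l != k -> x l = x' l) /\
    noiseless_signal H j x != noiseless_signal H j x'.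

Definition zf_decodable (R : nzRingType) (K : nat) (H : 'M[R]_K)
  (B : {set 'I_K}) (j m : 'I_K) : Prop :=
  forall k : 'I_K, k \notin B -> (depends_on H j k <-> k = m).

(* A zero-forcing message passing decoding scheme: association sets and a
   decoding order, a sequence of (MT, BS) pairs: message of MT m is decoded at
   BS b, in this order. *)
Record zf_scheme (K : nat) := ZFScheme {
  assoc : 'I_K -> {set 'I_K};
  dorder : seq ('I_K * 'I_K)
}.

Definition backhaul (K : nat) (S : zf_scheme K) (t : nat) (b : 'I_K) : {set 'I_K} :=
  [set m | has (fun p : 'I_K * 'I_K => (p.1 == m) && (b \in assoc S p.1))
               (take t (dorder S))].

Definition valid_zf_scheme (R : nzRingType) (K Nc : nat) (H : 'M[R]_K)
  (S : zf_scheme K) : Prop :=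
  [/\ forall m : 'I_K, (#|assoc S m| <= Nc)%N,
      uniq (map fst (dorder S))
    & forall t : nat, (t < size (dorder S))%N ->
        forall p : 'I_K * 'I_K, nth p (dorder S) t = p ->
          p.2 \in assoc S p.1 /\ zf_decodable H (backhaul S t p.2) p.2 p.1].

Definition decoding_pair (K : nat) (S : zf_scheme K) (i j : 'I_K) : Prop :=
  (i, j) \in dorder S.

(* When MT i is decoded at BS j, every other MT interfering at BS j must
   already have been decoded, or BS j would still see its message.  So two
   decoding pairs whose MTs each interfere at the other's BS would have to be
   decoded strictly before one another.  In the locally connected network a
   decoded MT lies in the window [j, j + L] of its BS, and crossing pairs
   would put each MT in the other's window; equal MTs give equal pairs since
   each message is decoded only once. *)
From mathcomp Require Import all_boot all_order all_algebra.
From mathcomp Require Import zify.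
Import GRing.Theory.
Set Implicit Arguments. Unset Strict Implicit.

Lemma depends_onE (R : nzRingType) (K : nat) (H : 'M[R]_K) (j k : 'I_K) :
  depends_on H j k <-> H k j != 0%R.
Proof.
split.
- case=> x [x' [eq_x]]; apply: contra => /eqP Hkj0; apply/eqP.
  apply: eq_bigr => l _.
  by have [->|/eq_x ->] := eqVneq l k; rewrite ?Hkj0 ?mul0r.
- move=> Hkj_neq0; exists (fun _ => 0%R), (fun l => ((l == k)%:R)%R); split.
    by move=> l /negbTE ->.
  rewrite /noiseless_signal big1 => [|l _]; last by rewrite mulr0.
  rewrite (bigD1 k) //= eqxx mulr1 big1 ?addr0 => [|l /negbTE ->]; last first.
    by rewrite mulr0.
  by rewrite eq_sym.
Qed.

(* The step at which message [m] is decoded ([size (dorder S)] if never). *)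
Definition decoding_time (K : nat) (S : zf_scheme K) (m : 'I_K) : nat :=
  index m (map fst (dorder S)).

Lemma backhaul_decoded_before (K : nat) (S : zf_scheme K) (t : nat) (b k : 'I_K) :
  k \in backhaul S t b -> (decoding_time S k < t)%N.
Proof.
rewrite inE => /hasP [p p_in /andP [/eqP p1k _]].
have k_in : k \in take t (map fst (dorder S)).
  by rewrite -map_take; apply/mapP; exists p.
rewrite /decoding_time -(cat_take_drop t (map fst (dorder S))) index_cat k_in.
rewrite -index_mem in k_in.
by apply: leq_trans k_in _; rewrite size_take_min geq_minl.
Qed.

Lemma decoding_time_index (K : nat) (S : zf_scheme K) (p : 'I_K * 'I_K) :
  uniq (map fst (dorder S)) -> p \in dorder S ->
  decoding_time S p.1 = index p (dorder S).
Proof.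
move=> uniq_fst p_in.
rewrite /decoding_time -{1}(nth_index p p_in) -(nth_map p p.1) ?index_mem //.
by rewrite index_uniq ?size_map ?index_mem.
Qed.

Section ValidScheme.

Variables (R : nzRingType) (K Nc : nat) (H : 'M[R]_K) (S : zf_scheme K).
Hypothesis S_valid : valid_zf_scheme Nc H S.

Lemma decoding_pair_uniq (i j1 j2 : 'I_K) :
  decoding_pair S i j1 -> decoding_pair S i j2 -> j1 = j2.
Proof.
case: S_valid => _ uniq_fst _ p1 p2.
have := decoding_time_index uniq_fst p2; rewrite (decoding_time_index uniq_fst p1).
by move=> /(congr1 (nth (i, j1) (dorder S))); rewrite !nth_index // => -[].
Qed.

Lemma decoding_pair_zf_decodable (i j : 'I_K) : decoding_pair S i j ->
  zf_decodable H (backhaul S (decoding_time S i) j) j i.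
Proof.
case: S_valid => _ uniq_fst dec p_in.
rewrite (decoding_time_index uniq_fst p_in).
have t_lt : (index (i, j) (dorder S) < size (dorder S))%N by rewrite index_mem.
by have [] := dec _ t_lt (i, j) (nth_index _ p_in).
Qed.

Lemma decoding_pair_gain_neq0 (i j : 'I_K) : decoding_pair S i j -> H i j != 0%R.
Proof.
move=> p_in; apply/depends_onE/(decoding_pair_zf_decodable p_in) => //.
by apply/negP => /backhaul_decoded_before; rewrite ltnn.
Qed.

Lemma interferer_decoded_before (i j k : 'I_K) : decoding_pair S i j ->
  k != i -> H k j != 0%R -> (decoding_time S k < decoding_time S i)%N.
Proof.
move=> p_in k_neq_i Hkj_neq0.
have [/backhaul_decoded_before //|k_notin] :=
  boolP (k \in backhaul S (decoding_time S i) j).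
have /eqP := (decoding_pair_zf_decodable p_in k_notin).1 ((depends_onE _ _ _).2 Hkj_neq0).
by rewrite (negbTE k_neq_i).
Qed.

Lemma no_mutual_interference (a b c d : 'I_K) :
  decoding_pair S a b -> decoding_pair S c d -> a != c ->
  H c b != 0%R -> H a d != 0%R -> False.
Proof.
move=> pab pcd a_neq_c Hcb Had.
have c_neq_a : c != a by rewrite eq_sym.
have lt_ca := interferer_decoded_before pab c_neq_a Hcb.
have lt_ac := interferer_decoded_before pcd a_neq_c Had.
by have := ltn_trans lt_ac lt_ca; rewrite ltnn.
Qed.

End ValidScheme.

Theorem corollary1 (R : fieldType) (K L Nc : nat) (H : 'M[R]_K)
  (hH : locally_connected L H) (S : zf_scheme K)
  (hS : valid_zf_scheme Nc H S) (i1 j1 i2 j2 : 'I_K) :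
  decoding_pair S i1 j1 -> decoding_pair S i2 j2 ->
  ((i2 < i1)%N <-> (j2 < j1)%N).
Proof.
move=> p1 p2.
have /hH win1 := decoding_pair_gain_neq0 hS p1.
have /hH win2 := decoding_pair_gain_neq0 hS p2.
have crossing := no_mutual_interference hS.
split=> lt.
- rewrite ltnNge; apply/negP => le_j.
  apply: (crossing _ _ _ _ p1 p2); first by rewrite neq_ltn lt orbT.
  + by apply/hH; lia.
  + by apply/hH; lia.
- have [//|lt_i|/val_inj eq_i] := ltngtP i2 i1.
  + exfalso; apply: (crossing _ _ _ _ p1 p2); first by rewrite neq_ltn lt_i.
    * by apply/hH; lia.
    * by apply/hH; lia.
  + move: p2; rewrite eq_i => /(decoding_pair_uniq hS p1) eq_j.
    by move: lt; rewrite eq_j ltnn.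
Qed.
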